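(* Let $n\ge 2$ and $x\in\mathbb{R}^{n+1}$ with $|x|<1$, and let $f: S^n \to (0,\infty)$ be $f(y) = |y-x|$. Then, as symmetric 2-tensors on $S^n$, $$\frac{\nabla_{S^n}^2 f}{f} \geq -\frac{1}{4}\, g .$$ Equivalently, for every $y\in S^n$ and every unit vector $\theta\in\mathbb{R}^{n+1}$ with $\langle y,\theta\rangle = 0$, $$\frac{1}{|y-x|^2}\left(\langle x,y\rangle - \frac{\langle x,\theta\rangle^2}{|y-x|^2}\right) \geq -\frac14 .$$
   Context: $S^n\subset\mathbb{R}^{n+1}$ is the unit sphere with its canonical Riemannian metric $g$, and $\nabla_{S^n}^2$ denotes the Riemannian Hessian (with respect to the Levi-Civita connection of $g$) of a function on $S^n$. $\langle\cdot,\cdot\rangle$ and $|\cdot|$ are the Euclidean inner product and norm on $\mathbb{R}^{n+1}$. *)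

From Stdlib Require Import Reals.
Open Scope R_scope.

(* Vectors of R^{n+1} are represented as functions nat -> R, of which only the
   coordinates 0..n are relevant. *)
Definition vec := nat -> R.

(* Euclidean inner product on R^{n+1}: sum over i = 0..n (sum_f_R0 has n+1 terms). *)
Definition dot (n : nat) (u v : vec) : R := sum_f_R0 (fun i => u i * v i) n.
Definition norm (n : nat) (u : vec) : R := sqrt (dot n u u).
Definition vsub (u v : vec) : vec := fun i => u i - v i.

Definition on_sphere (n : nat) (y : vec) : Prop := norm n y = 1.

(* The unit-speed great circle (geodesic of S^n) through y with unit initial
   velocity theta (theta tangent at y): t |-> cos t * y + sin t * theta. *)
Definition geod (y theta : vec) (t : R) : vec :=
  fun i => cos t * y i + sin t * theta i.

(* Riemannian Hessian quadratic form of F (restricted to S^n) at y in the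
   unit tangent direction theta: (Hess F)_y(theta,theta) = (F o gamma)''(0)
   for the geodesic gamma with gamma(0)=y, gamma'(0)=theta.
   [sphere_hess F y theta l] says this second derivative exists and equals l. *)
Definition sphere_hess (F : vec -> R) (y theta : vec) (l : R) : Prop :=
  exists h' : R -> R,
    (forall t, derivable_pt_lim (fun s => F (geod y theta s)) t (h' t)) /\
    derivable_pt_lim h' 0 l.

(* Along the great circle γ(s) = cos s · y + sin s · θ, with r = |x|², a = ⟨x,y⟩, b = ⟨x,θ⟩,
   one has |γ(s) - x|² = 1 + r - 2a cos s - 2b sin s, so the Hessian is the second derivative
   at 0 of the square root of this trigonometric polynomial, namely a/d - b²/d³ with d = |y - x|.
   Multiplied by 4d⁴ the claim reads 4a d² - 4b² + d⁴ ≥ 0, and by Bessel's inequality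
   b² ≤ r - a² the left side is at least 4a d² - 4(r - a²) + d⁴ = (1 - r)², since d² = 1 + r - 2a. *)
From Coquelicot Require Import Coquelicot.
From Stdlib Require Import Reals Lra Psatz FunctionalExtensionality.
Open Scope R_scope.

Lemma dot_self_ge0 (n : nat) (u : vec) : 0 <= dot n u u.
Proof. apply cond_pos_sum; intro i; nra. Qed.

Lemma norm_eq1_dot (n : nat) (u : vec) : norm n u = 1 -> dot n u u = 1.
Proof.
  unfold norm; intro H.
  rewrite <- (sqrt_sqrt _ (dot_self_ge0 n u)), H; ring.
Qed.

Lemma norm_lt1_dot (n : nat) (u : vec) : norm n u < 1 -> dot n u u < 1.
Proof.
  unfold norm; intro H.
  destruct (Rlt_or_le (dot n u u) 1) as [Hlt | Hge]; [exact Hlt |].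
  apply sqrt_le_1_alt in Hge; rewrite sqrt_1 in Hge; lra.
Qed.

Lemma dot_comb_sub_self (n : nat) (u v w : vec) (p q : R) :
  dot n (fun i => p * u i + q * v i - w i) (fun i => p * u i + q * v i - w i) =
  p * p * dot n u u + q * q * dot n v v + dot n w w + 2 * p * q * dot n u v
  - 2 * p * dot n w u - 2 * q * dot n w v.
Proof.
  unfold dot; induction n as [|n IH]; simpl; [ring |].
  rewrite IH; ring.
Qed.

Section Orthonormal.

Variables (n : nat) (y theta : vec).
Hypotheses (Hy : dot n y y = 1) (Htheta : dot n theta theta = 1)
  (Hytheta : dot n y theta = 0).

Lemma bessel_orthonormal2 (x : vec) :
  dot n x y ^ 2 + dot n x theta ^ 2 <= dot n x x.
Proof.
  pose proof (dot_self_ge0 n (fun i => dot n x y * y i + dot n x theta * theta i - x i))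
    as Hge0.
  rewrite dot_comb_sub_self, Hy, Htheta, Hytheta in Hge0; nra.
Qed.

Lemma dot_sub_geod_self (x : vec) (s : R) :
  dot n (vsub (geod y theta s) x) (vsub (geod y theta s) x) =
  1 + dot n x x - 2 * dot n x y * cos s - 2 * dot n x theta * sin s.
Proof.
  change (vsub (geod y theta s) x) with (fun i => cos s * y i + sin s * theta i - x i).
  rewrite dot_comb_sub_self, Hy, Htheta, Hytheta.
  pose proof (sin2_cos2 s) as Hpyth; unfold Rsqr in Hpyth; nra.
Qed.

End Orthonormal.

Lemma geod_0 (y theta : vec) : geod y theta 0 = y.
Proof.
  apply functional_extensionality; intro i.
  unfold geod; rewrite cos_0, sin_0; ring.
Qed.

Lemma chord_sq_pos (r a b s : R) :
  r < 1 -> a ^ 2 + b ^ 2 <= r -> 0 < 1 + r - 2 * a * cos s - 2 * b * sin s.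
Proof.
  intros Hr Hab.
  pose proof (sin2_cos2 s) as Hpyth; unfold Rsqr in Hpyth.
  (* Cauchy–Schwarz: (a cos s + b sin s)² ≤ a² + b² ≤ r < ((1 + r)/2)² *)
  assert (Hcs : (a * cos s + b * sin s) ^ 2 <= r).
  { assert (Hlagrange : (a * cos s + b * sin s) ^ 2 + (a * sin s - b * cos s) ^ 2
                        = a ^ 2 + b ^ 2)
      by (rewrite <- (Rmult_1_r (a ^ 2 + b ^ 2)), <- Hpyth; ring).
    pose proof (pow2_ge_0 (a * sin s - b * cos s)); lra. }
  assert (0 <= r) by nra.
  nra.
Qed.

Section SqrtChord.

Variables r a b : R.
Let Q (s : R) : R := 1 + r - 2 * a * cos s - 2 * b * sin s.
Hypothesis Q_pos : forall s, 0 < Q s.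

Lemma sqrt_chord_second_derivative :
  exists h' : R -> R,
    (forall t, derivable_pt_lim (fun s => sqrt (Q s)) t (h' t)) /\
    derivable_pt_lim h' 0 (a / sqrt (1 + r - 2 * a) - b ^ 2 / sqrt (1 + r - 2 * a) ^ 3).
Proof.
  exists (fun t => (a * sin t - b * cos t) / sqrt (Q t)); split.
  - intro t; apply is_derive_Reals; unfold Q.
    pose proof (Q_pos t) as Ht; unfold Q in Ht.
    auto_derive; [lra |].
    assert (sqrt (1 + r - 2 * a * cos t - 2 * b * sin t) <> 0)
      by (apply Rgt_not_eq, sqrt_lt_R0; lra).
    replace (1 + r + - (2 * a * cos t) + - (2 * b * sin t))
      with (1 + r - 2 * a * cos t - 2 * b * sin t) by ring.
    field; assumption.
  - apply is_derive_Reals; unfold Q.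
    pose proof (Q_pos 0) as H0; unfold Q in H0; rewrite cos_0, sin_0 in H0.
    assert (Hd : 0 < sqrt (1 + r - 2 * a)) by (apply sqrt_lt_R0; lra).
    auto_derive.
    { rewrite cos_0, sin_0.
      replace (1 + r + - (2 * a * 1) + - (2 * b * 0)) with (1 + r - 2 * a) by ring.
      repeat split; lra. }
    rewrite cos_0, sin_0.
    replace (1 + r + - (2 * a * 1) + - (2 * b * 0)) with (1 + r - 2 * a) by ring.
    field; lra.
Qed.

End SqrtChord.

Lemma hess_ratio_ge (r a b : R) :
  0 < 1 + r - 2 * a -> b ^ 2 <= r - a ^ 2 ->
  / (1 + r - 2 * a) * (a - b ^ 2 / (1 + r - 2 * a)) >= - (1 / 4).
Proof.
  intros HD Hb.
  set (D := 1 + r - 2 * a) in *.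
  assert (Hid : 4 * a * D - 4 * (r - a ^ 2) + D ^ 2 = (1 - r) ^ 2) by (unfold D; ring).
  assert (Hnum : 0 <= 4 * a * D - 4 * b ^ 2 + D ^ 2)
    by (pose proof (pow2_ge_0 (1 - r)); lra).
  apply Rle_ge.
  replace (/ D * (a - b ^ 2 / D))
    with ((4 * a * D - 4 * b ^ 2 + D ^ 2) / (4 * D ^ 2) - 1 / 4) by (field; lra).
  assert (0 <= (4 * a * D - 4 * b ^ 2 + D ^ 2) / (4 * D ^ 2))
    by (apply Rdiv_le_0_compat; nra).
  lra.
Qed.

Theorem mainTheorem2 (n : nat) (hn : (2 <= n)%nat) (x : vec)
  (hx : norm n x < 1) :
  forall y theta : vec,
    on_sphere n y -> norm n theta = 1 -> dot n y theta = 0 ->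
    (exists l : R,
        sphere_hess (fun z => norm n (vsub z x)) y theta l /\
        l / norm n (vsub y x) >= - (1 / 4))
    /\
    / (norm n (vsub y x)) ^ 2 *
      (dot n x y - (dot n x theta) ^ 2 / (norm n (vsub y x)) ^ 2) >= - (1 / 4).
Proof.
  intros y theta Hy Htheta Hytheta.
  apply norm_eq1_dot in Hy; apply norm_eq1_dot in Htheta.
  pose proof (bessel_orthonormal2 n y theta Hy Htheta Hytheta x) as Hbessel.
  pose proof (norm_lt1_dot n x hx) as Hr.
  set (r := dot n x x) in *; set (a := dot n x y) in *; set (b := dot n x theta) in *.
  pose proof (fun s => chord_sq_pos r a b s Hr Hbessel) as Q_pos.
  assert (Hdist : forall s, norm n (vsub (geod y theta s) x)
                            = sqrt (1 + r - 2 * a * cos s - 2 * b * sin s))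
    by (intro s; unfold norm; rewrite dot_sub_geod_self by assumption; reflexivity).
  assert (HD : 0 < 1 + r - 2 * a) by (pose proof (Q_pos 0); rewrite cos_0, sin_0 in *; lra).
  assert (Hd : norm n (vsub y x) = sqrt (1 + r - 2 * a))
    by (rewrite <- (geod_0 y theta), Hdist, cos_0, sin_0; f_equal; ring).
  pose proof (hess_ratio_ge r a b HD ltac:(lra)) as Hbound.
  rewrite Hd, pow2_sqrt by lra.
  split; [| exact Hbound].
  destruct (sqrt_chord_second_derivative r a b Q_pos) as [h' [Hh' Hh'']].
  eexists; split.
  - exists h'; split; [| exact Hh''].
    intro t; rewrite (functional_extensionality _ _ Hdist); apply Hh'.
  - assert (Hsd : 0 < sqrt (1 + r - 2 * a)) by (apply sqrt_lt_R0; lra).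
    rewrite <- (pow2_sqrt (1 + r - 2 * a)) in Hbound by lra.
    set (d := sqrt (1 + r - 2 * a)) in *.
    replace ((a / d - b ^ 2 / d ^ 3) / d) with (/ d ^ 2 * (a - b ^ 2 / d ^ 2))
      by (field; lra).
    exact Hbound.
Qed.
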